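(* Let $\Lambda_2,\Lambda_3,\Lambda_4\in\mathbb C$ with $\Lambda_4\ne0$ and let $\mathcal V^{[2]}$, $v_\lambda$, $\xi$, $\widetilde{\mathbf L}_\mu$ and $\deg_\delta$ be as in the context. Define $M(v_\mu,v_\lambda)=\xi\big(\widetilde{\mathbf L}_\mu\mathbf L_{-\lambda}|J\rangle\big)$. Then for all partitions $\lambda,\mu$: $M(v_\mu,v_\lambda)=0$ whenever $\deg_1v_\mu>\deg_1v_\lambda$. If moreover $\Lambda_3=0$, then $M(v_\mu,v_\lambda)=0$ whenever $\deg_2v_\mu>\deg_2v_\lambda$.
   Context: $\mathcal V^{[2]}$ is the Virasoro Whittaker module generated by $|J\rangle$ with $L_n|J\rangle=\Lambda_n|J\rangle$ ($n=2,3,4$), $L_n|J\rangle=0$ ($n>4$). Basis $v_\lambda=\mathbf L_{-\lambda}|J\rangle$, $\mathbf L_{-\lambda}=L_{-\lambda_1+2}\cdots L_{-\lambda_\ell+2}$ for partitions $\lambda=(\lambda_1\ge\dots\ge\lambda_\ell\ge1)$, $v_\emptyset=|J\rangle$. $\xi$ is the linear functional giving the coefficient of $|J\rangle$ in this basis. Shifted generators: $\widetilde L_n=L_n-\Lambda_n$ for $n=3,4$ and $\widetilde L_n=L_n$ for $n>4$; $\widetilde{\mathbf L}_\mu=\widetilde L_{\mu_1+2}\cdots\widetilde L_{\mu_m+2}$ for $\mu=(\mu_1\ge\dots\ge\mu_m\ge1)$. For $\delta\in\{1,2\}$ and $\lambda=(\cdots3^{n_3}2^{n_2}1^{n_1})$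 (multiplicity notation), $\deg_\delta v_\lambda=n_1+\delta n_2+\sum_{k>2}n_k(k-2)$; equivalently $\deg_\delta L_{-k}=k$ ($k>0$), $\deg_\delta L_0=\delta$, $\deg_\delta L_1=1$. *)

From HB Require Import structures.
From mathcomp Require Import all_boot all_order all_algebra.
From mathcomp Require Import reals.
From mathcomp Require Import complex.
Set Implicit Arguments. Unset Strict Implicit. Unset Printing Implicit Defensive.
Import Order.TTheory GRing.Theory Num.Theory.
Local Open Scope ring_scope.

Definition is_partition (l : seq nat) : bool :=
  sorted geq l && all (fun k => 0 < k)%N l.

Section Vir.
Variables (F : fieldType) (V : lmodType F).

Definition is_vir_rep (c : F) (L : int -> V -> V) : Prop :=
  (forall n (a : F) (u v : V), L n (a *: u + v) = a *: L n u + L n v) /\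
  (forall (m n : int) (v : V),
     L m (L n v) - L n (L m v) =
       (m - n)%:~R *: L (m + n) v +
       (if m + n == 0 then (c / 12%:R * (m ^+ 3 - m)%:~R) *: v else 0)).

Definition is_whittaker2 (L : int -> V -> V) (La2 La3 La4 : F) (J : V) : Prop :=
  [/\ L 2 J = La2 *: J, L 3 J = La3 *: J, L 4 J = La4 *: J &
      forall n : int, 4 < n -> L n J = 0].

Definition vlam (L : int -> V -> V) (J : V) (la : seq nat) : V :=
  foldr (fun k v => L (2 - k%:Z) v) J la.

Definition is_partition_basis (b : seq nat -> V) : Prop :=
  (forall v : V, exists (s : seq (seq nat)) (a : seq nat -> F),
      all is_partition s /\ v = \sum_(p <- s) a p *: b p) /\
  (forall (s : seq (seq nat)) (a : seq nat -> F),
      uniq s -> all is_partition s ->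
      \sum_(p <- s) a p *: b p = 0 -> forall p, p \in s -> a p = 0).

Definition is_xi (b : seq nat -> V) (xi : V -> F) : Prop :=
  (forall (a : F) (u v : V), xi (a *: u + v) = a * xi u + xi v) /\
  (forall p, is_partition p -> xi (b p) = if p == [::] then 1 else 0).

Definition Ltilde (L : int -> V -> V) (La3 La4 : F) (n : int) (v : V) : V :=
  if n == 3 then L n v - La3 *: v
  else if n == 4 then L n v - La4 *: v
  else L n v.

Definition Ltilde_mu (L : int -> V -> V) (La3 La4 : F) (mu : seq nat) (v : V) : V :=
  foldr (fun k w => Ltilde L La3 La4 (k.+2)%:Z w) v mu.

End Vir.

Definition deg_part (delta k : nat) : nat :=
  if k == 1%N then 1%N else if k == 2%N then delta else (k - 2)%N.

Definition deg (delta : nat) (la : seq nat) : nat :=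
  sumn (map (deg_part delta) la).

From HB Require Import structures.
From mathcomp Require Import all_boot all_order all_algebra.
From mathcomp Require Import reals.
From mathcomp Require Import complex.
From mathcomp Require Import zify.
Set Implicit Arguments. Unset Strict Implicit. Unset Printing Implicit Defensive.
Import Order.TTheory GRing.Theory Num.Theory.
Local Open Scope ring_scope.

(* Give L_{2-k} (k >= 1) the degree deg_part k, so that the creation operators
   raise deg_delta additively, and let F_e be the span of the v_s with
   deg_delta s <= e.  Then for n >= 2 the shifted annihilator L~_n maps F_e into
   F_(e - deg_part (n-2)): commuting it past a creation operator L_{2-k} produces
   (n+k-2) L_{n+2-k}, which is again a creation operator of smaller degree when
   k >= n, and otherwise a lowering operator L~_{n+2-k} plus the constant
   Lambda_{n+2-k}, which is harmless except for Lambda_3 in degree deg_2.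
   Hence L~_mu v_lambda lies in F_(deg lambda - deg mu), which is {0} as soon as
   deg mu > deg lambda, and so xi vanishes on it. *)

Lemma deg_part_sub_add_le (d n k : nat) : (1 <= d <= 2)%N -> (2 <= n <= k)%N ->
  (deg_part d (k - n) + deg_part d (n - 2) <= deg_part d k)%N.
Proof. by move=> d12 nk; rewrite /deg_part; repeat case: ifP => /eqP ?; lia. Qed.

Lemma deg_part_sub2_le (d n k : nat) : (1 <= d <= 2)%N -> (k < n)%N ->
  (deg_part d (n - 2) <= deg_part d k + deg_part d (n - k))%N.
Proof. by move=> d12 kn; rewrite /deg_part; repeat case: ifP => /eqP ?; lia. Qed.

Lemma deg_part1_mono (a b : nat) : (a <= b)%N -> (deg_part 1 a <= deg_part 1 b)%N.
Proof. by move=> ab; rewrite /deg_part; repeat case: ifP => /eqP ?; lia. Qed.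

Lemma deg_cons (d k : nat) (s : seq nat) : deg d (k :: s) = (deg_part d k + deg d s)%N.
Proof. by []. Qed.

Section Filtration.
Variables (F : fieldType) (V : lmodType F) (L : int -> V -> V) (J : V) (d : nat).

Inductive filt : int -> V -> Prop :=
| filt0 e : filt e 0
| filt_vlam e s : (deg d s)%:Z <= e -> filt e (vlam L J s)
| filt_lin e (a : F) u v : filt e u -> filt e v -> filt e (a *: u + v).

Lemma filt_le (e e' : int) v : filt e v -> e <= e' -> filt e' v.
Proof.
elim=> [x | x s le_sx | x a u w _ IHu _ IHw] le_xe'.
- exact: filt0.
- by apply: filt_vlam; lia.
- by apply: filt_lin; [apply: IHu | apply: IHw].
Qed.

Lemma filt_neg_eq0 (e : int) v : filt e v -> e < 0 -> v = 0.
Proof.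
elim=> [x | x s le_sx | x a u w _ IHu _ IHw] x_lt0 //; first by lia.
by rewrite IHu // IHw // scaler0 addr0.
Qed.

Lemma filtZ e a v : filt e v -> filt e (a *: v).
Proof. by move=> fv; rewrite -[a *: v]addr0; apply: filt_lin => //; apply: filt0. Qed.

Lemma filtD e u v : filt e u -> filt e v -> filt e (u + v).
Proof. by move=> fu fv; rewrite -[u]scale1r; apply: filt_lin. Qed.

Variables (c La2 La3 La4 : F).
Hypothesis vir : is_vir_rep c L.
Hypothesis whit : is_whittaker2 L La2 La3 La4 J.
Hypothesis d12 : (1 <= d <= 2)%N.
Hypothesis d1_or_La3_eq0 : d = 1%N \/ La3 = 0.

Lemma L_lin n a u v : L n (a *: u + v) = a *: L n u + L n v.
Proof. exact: vir.1. Qed.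

Lemma L0 n : L n 0 = 0.
Proof. by apply: (addrI (L n 0)); rewrite addr0 -{1}(scale1r (L n 0)) -L_lin scale1r addr0. Qed.

Lemma LZ n a u : L n (a *: u) = a *: L n u.
Proof. by rewrite -[a *: u]addr0 L_lin L0 addr0. Qed.

Lemma LB n u v : L n (u - v) = L n u - L n v.
Proof. by rewrite -[- v]scaleN1r addrC L_lin scaleN1r addrC. Qed.

Definition Lambda (n : int) : F := if n == 3 then La3 else if n == 4 then La4 else 0.

Lemma LtildeE n v : Ltilde L La3 La4 n v = L n v - Lambda n *: v.
Proof. by rewrite /Ltilde /Lambda; do 2!case: ifP => // _; rewrite scale0r subr0. Qed.

Lemma Ltilde_lin n a u v : Ltilde L La3 La4 n (a *: u + v) =
  a *: Ltilde L La3 La4 n u + Ltilde L La3 La4 n v.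
Proof. by rewrite !LtildeE L_lin scalerDr scalerBr !scalerA mulrC addrACA opprD. Qed.

Lemma Ltilde_comm n m v : Ltilde L La3 La4 n (L m v) =
  L m (Ltilde L La3 La4 n v) + (L n (L m v) - L m (L n v)).
Proof. by rewrite !LtildeE LB LZ [RHS]addrC addrA subrK. Qed.

Lemma filt_create e k v :
  filt e v -> filt (e + (deg_part d k)%:Z) (L (2 - k%:Z) v).
Proof.
elim=> [x | x s le_sx | x a u w _ IHu _ IHw].
- by rewrite L0; apply: filt0.
- by apply: (@filt_vlam _ (k :: s)); rewrite deg_cons; lia.
- by rewrite L_lin; apply: filt_lin.
Qed.

Lemma filt_Ltilde_J n : (2 <= n)%N ->
  filt (- (deg_part d (n - 2))%:Z) (Ltilde L La3 La4 n%:Z J).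
Proof.
have [L2J L3J L4J L5J] := whit.
case: n => [|[|[|[|[|n]]]]] // _; rewrite /Ltilde /=.
- by rewrite L2J; apply/filtZ/(@filt_vlam _ [::]).
- by rewrite L3J subrr; apply: filt0.
- by rewrite L4J subrr; apply: filt0.
- by rewrite L5J //; apply: filt0.
Qed.

Lemma filt_L_commutator e v n k : (2 <= n)%N -> filt e v ->
  (forall m, (2 <= m)%N ->
     filt (e - (deg_part d (m - 2))%:Z) (Ltilde L La3 La4 m%:Z v)) ->
  filt (e + (deg_part d k)%:Z - (deg_part d (n - 2))%:Z) (L (n%:Z + (2 - k%:Z)) v).
Proof.
move=> n2 fv IHv; have [le_nk | lt_kn] := leqP n k.
  rewrite (_ : n%:Z + _ = 2 - (k - n)%:Z); last by lia.
  apply: filt_le (filt_create (k - n) fv) _.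
  have n2k : (2 <= n <= k)%N by rewrite n2.
  by have := deg_part_sub_add_le d12 n2k; lia.
rewrite (_ : n%:Z + _ = (n + 2 - k)%N%:Z); last by lia.
rewrite -[L _ v](subrK (Lambda (n + 2 - k)%N *: v)) -LtildeE; apply: filtD.
  apply: filt_le (IHv _ (_ : 2 <= n + 2 - k)%N) _; first by lia.
  by have := deg_part_sub2_le d12 lt_kn; rewrite (_ : n + 2 - k - 2 = n - k)%N; lia.
rewrite /Lambda; case: eqP => [k_n1 | _].
  have [d1 | ->] := d1_or_La3_eq0; last by rewrite scale0r; apply: filt0.
  apply/filtZ/(filt_le fv); rewrite d1.
  by have := @deg_part1_mono (n - 2) k; lia.
case: eqP => [k_n2 | _]; last by rewrite scale0r; apply: filt0.
by apply/filtZ/(filt_le fv); rewrite (_ : k = n - 2)%N; lia.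
Qed.

Lemma filt_Ltilde_vlam s n : (2 <= n)%N ->
  filt ((deg d s)%:Z - (deg_part d (n - 2))%:Z) (Ltilde L La3 La4 n%:Z (vlam L J s)).
Proof.
elim: s n => [|k s IHs] n n2; first by rewrite sub0r; apply: filt_Ltilde_J.
have fv : filt (deg d s)%:Z (vlam L J s) by apply: filt_vlam.
rewrite deg_cons [vlam _ _ _]/= Ltilde_comm vir.2; apply: filtD; last apply: filtD.
- by apply: filt_le (filt_create k (IHs n n2)) _; lia.
- by apply/filtZ/(filt_le (filt_L_commutator k n2 fv IHs)); lia.
- case: eqP => [nk0 | _]; last exact: filt0.
  have n2k : (2 <= n <= k)%N by rewrite n2; lia.
  by apply/filtZ/(filt_le fv); have := deg_part_sub_add_le d12 n2k; lia.
Qed.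

Lemma filt_Ltilde e v n : (2 <= n)%N -> filt e v ->
  filt (e - (deg_part d (n - 2))%:Z) (Ltilde L La3 La4 n%:Z v).
Proof.
move=> n2; elim=> [x | x s le_sx | x a u w _ IHu _ IHw].
- by rewrite LtildeE L0 scaler0 subr0; apply: filt0.
- by apply: filt_le (filt_Ltilde_vlam s n2) _; lia.
- by rewrite Ltilde_lin; apply: filt_lin.
Qed.

Lemma filt_Ltilde_mu mu la :
  filt ((deg d la)%:Z - (deg d mu)%:Z) (Ltilde_mu L La3 La4 mu (vlam L J la)).
Proof.
elim: mu => [|k mu IHmu]; first by apply: filt_vlam; rewrite subr0.
apply: filt_le (filt_Ltilde (_ : 2 <= k.+2)%N IHmu) _ => //.
by rewrite deg_cons !subSS subn0; lia.
Qed.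

Lemma Ltilde_mu_vlam_eq0 la mu : (deg d la < deg d mu)%N ->
  Ltilde_mu L La3 La4 mu (vlam L J la) = 0.
Proof. by move=> lt_deg; apply: filt_neg_eq0 (filt_Ltilde_mu mu la) _; lia. Qed.

End Filtration.

Theorem lemmaA3 (R : realType) (c La2 La3 La4 : R[i])
  (V : lmodType R[i]) (L : int -> V -> V) (J : V) (xi : V -> R[i]) :
  La4 != 0 ->
  is_vir_rep c L ->
  is_whittaker2 L La2 La3 La4 J ->
  is_partition_basis (vlam L J) ->
  is_xi (vlam L J) xi ->
  (forall la mu : seq nat, is_partition la -> is_partition mu ->
     (deg 1 la < deg 1 mu)%N ->
     xi (Ltilde_mu L La3 La4 mu (vlam L J la)) = 0) /\
  (La3 = 0 ->
   forall la mu : seq nat, is_partition la -> is_partition mu ->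
     (deg 2 la < deg 2 mu)%N ->
     xi (Ltilde_mu L La3 La4 mu (vlam L J la)) = 0).
Proof.
move=> _ vir whit _ [xi_lin _].
have xi0 : xi 0 = 0.
  by apply: (addrI (xi 0)); rewrite addr0 -{1}(mul1r (xi 0)) -xi_lin scale1r addr0.
split=> [|La3_0] la mu _ _ lt_deg.
- by rewrite (Ltilde_mu_vlam_eq0 vir whit _ (or_introl erefl) lt_deg).
- by rewrite (Ltilde_mu_vlam_eq0 vir whit _ (or_intror La3_0) lt_deg).
Qed.
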